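(* For every Tychonoff space $X$, the following are equivalent: (1) $C_p(X)\models S_1(\Gamma_f,\mathcal B_f)$ for every $f\in C(X)$; (2) $X\models S_1(\Gamma_F,\mathcal O)$.
   Context: All spaces are Tychonoff; $C_p(X)$ is $C(X)$ with pointwise convergence topology. For $f\in C(X)$: $\Gamma_f$ is the family of infinite $A\subseteq C(X)$ with $f\notin A$ such that every neighbourhood of $f$ contains all but finitely many elements of $A$; $\mathcal B_f$ is the family of sets $B\subseteq C(X)$ such that for every $x\in X$ and $\varepsilon>0$ there is $h\in B$ with $|h(x)-f(x)|<\varepsilon$. Zero-set: $g^{-1}(0)$, $g\in C(X)$; cozero-set: its complement. A cover $\mathcal U$ of $X$ always means $X=\bigcup\mathcal U$, $X\notin\mathcal U$; $\mathcal O$: family of open covers; $\gamma$-cover: infinite, each point in all but finitely many members. $\Gamma_F$: $\gamma$-covers $\mathcal U$ of $X$ by cozero-sets for which there are zero-sets $F(U)\subseteq U$ ($U\in\mathcal U$) with $\{F(U):U\in\mathcal U\}$ a $\gamma$-cover of $X$. $S_1(\mathcal P,\mathcal Q)$: for every sequence $(P_n)$ of elements of $\mathcal P$ there are $p_n\in P_n$ with $\{p_n:n\in\omega\}\in\mathcal Q$. *)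

From Stdlib Require Import Reals Rtopology List.
Open Scope R_scope.

Record is_topology (X : Type) (op : (X -> Prop) -> Prop) : Prop := {
  top_full  : op (fun _ => True);
  top_inter : forall U V, op U -> op V -> op (fun x => U x /\ V x);
  top_union : forall F : (X -> Prop) -> Prop,
      (forall U, F U -> op U) -> op (fun x => exists U, F U /\ U x)
}.

Definition continuous_R {X : Type} (op : (X -> Prop) -> Prop) (f : X -> R) : Prop :=
  forall V : R -> Prop, open_set V -> op (fun x => V (f x)).

Definition is_closed {X : Type} (op : (X -> Prop) -> Prop) (C : X -> Prop) : Prop :=
  op (fun x => ~ C x).

Definition tychonoff {X : Type} (op : (X -> Prop) -> Prop) : Prop :=
  (forall x y : X, x <> y -> exists U, op U /\ U x /\ ~ U y) /\
  (forall (C : X -> Prop) (x : X), is_closed op C -> ~ C x ->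
     exists f, continuous_R op f /\ f x = 0 /\ forall y, C y -> f y = 1).

Definition zero_set {X : Type} (op : (X -> Prop) -> Prop) (Z : X -> Prop) : Prop :=
  exists g, continuous_R op g /\ forall x, Z x <-> g x = 0.

Definition cozero_set {X : Type} (op : (X -> Prop) -> Prop) (U : X -> Prop) : Prop :=
  exists g, continuous_R op g /\ forall x, U x <-> g x <> 0.

Definition fin_fun {X : Type} (A : (X -> R) -> Prop) : Prop :=
  exists l : list (X -> R), forall g, A g -> In g l.

Definition fin_fam {X : Type} (F : (X -> Prop) -> Prop) : Prop :=
  exists l : list (X -> Prop), forall U, F U ->
    exists V, In V l /\ forall x, U x <-> V x.

Definition basic_nbhd {X : Type} (f : X -> R) (xs : list X) (eps : R) (g : X -> R) : Prop :=
  forall x, In x xs -> Rabs (g x - f x) < eps.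

Definition Gamma_f {X : Type} (op : (X -> Prop) -> Prop) (f : X -> R)
    (A : (X -> R) -> Prop) : Prop :=
  (forall g, A g -> continuous_R op g) /\
  ~ fin_fun A /\
  ~ A f /\
  (forall (xs : list X) (eps : R), 0 < eps ->
     fin_fun (fun g => A g /\ ~ basic_nbhd f xs eps g)).

Definition B_f {X : Type} (op : (X -> Prop) -> Prop) (f : X -> R)
    (B : (X -> R) -> Prop) : Prop :=
  (forall g, B g -> continuous_R op g) /\
  forall (x : X) (eps : R), 0 < eps -> exists h, B h /\ Rabs (h x - f x) < eps.

Definition S1_fun {X : Type} (P Q : ((X -> R) -> Prop) -> Prop) : Prop :=
  forall Pn : nat -> ((X -> R) -> Prop), (forall n, P (Pn n)) ->
    exists p : nat -> (X -> R), (forall n, Pn n (p n)) /\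
      Q (fun g => exists n, g = p n).

Definition is_cover {X : Type} (U : (X -> Prop) -> Prop) : Prop :=
  (forall x, exists V, U V /\ V x) /\ ~ (exists V, U V /\ forall x, V x).

Definition open_cover {X : Type} (op : (X -> Prop) -> Prop) (U : (X -> Prop) -> Prop) : Prop :=
  is_cover U /\ forall V, U V -> op V.

Definition gamma_cover {X : Type} (U : (X -> Prop) -> Prop) : Prop :=
  is_cover U /\ ~ fin_fam U /\
  forall x, fin_fam (fun V => U V /\ ~ V x).

Definition Gamma_F {X : Type} (op : (X -> Prop) -> Prop) (U : (X -> Prop) -> Prop) : Prop :=
  gamma_cover U /\ (forall V, U V -> cozero_set op V) /\
  exists F : (X -> Prop) -> (X -> Prop),
    (forall V, U V -> zero_set op (F V) /\ forall x, F V x -> V x) /\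
    gamma_cover (fun Z => exists V, U V /\ Z = F V).

Definition S1_set {X : Type} (P Q : ((X -> Prop) -> Prop) -> Prop) : Prop :=
  forall Un : nat -> ((X -> Prop) -> Prop), (forall n, P (Un n)) ->
    exists u : nat -> (X -> Prop), (forall n, Un n (u n)) /\
      Q (fun V => exists n, V = u n).

(* (1) => (2): for a Gamma_F-cover with zero sets F(U) included in U, pick for each zero
   set Z = F(U) a continuous h_Z vanishing exactly on Z and equal to 1 off U.  Since the
   F(U) form a gamma-cover, the h_Z converge pointwise to 0; a selection lying in B_0 has
   the sets {|h| < 1} covering X, and each of them lies in the corresponding U.
   (2) => (1): for A in Gamma_f and c > 0 the sets {|h - f| < c}, h in A, form a Gamma_F
   cover (witnessed by the zero sets {|h - f| <= c/2}) unless one of them is already X.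
   Selecting from such covers with c = 1/(k+1) on the k-th of infinitely many infinite
   blocks of indices yields a selection that approximates f at every point to every
   precision. *)
From Stdlib Require Import Reals Rtopology List Lra Classical ClassicalEpsilon
  FunctionalExtensionality PropExtensionality.
From Stdlib Require Cantor.
Open Scope R_scope.

Lemma set_ext {A : Type} (U V : A -> Prop) : (forall x, U x <-> V x) -> U = V.
Proof.
  intro E; apply functional_extensionality; intro x; apply propositional_extensionality; auto.
Qed.

Lemma fin_fam_In {X : Type} (W : (X -> Prop) -> Prop) :
  fin_fam W -> exists l, forall U, W U -> In U l.
Proof.
  intros [l Hl]; exists l; intros U HU.
  destruct (Hl U HU) as [V [HV E]]; rewrite (set_ext U V E); exact HV.
Qed.

Lemma gamma_cover_missing_finite {X : Type} (W : (X -> Prop) -> Prop) (xs : list X) :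
  gamma_cover W -> exists L, forall Z, W Z -> (exists x, In x xs /\ ~ Z x) -> In Z L.
Proof.
  intros [_ [_ Hpt]]; induction xs as [|x0 xs [L HL]].
  - exists nil; intros Z _ [x [[] _]].
  - destruct (fin_fam_In _ (Hpt x0)) as [l Hl].
    exists (l ++ L); intros Z HZ [x [[<-|Hx] Hnx]]; apply in_or_app.
    + left; apply Hl; auto.
    + right; apply HL; eauto.
Qed.

(* Every proper member misses a point, and one finite set of such points must lie in some member. *)
Lemma omega_cover_not_fin_fam {X : Type} (W : (X -> Prop) -> Prop) :
  (forall V, W V -> ~ (forall x, V x)) ->
  (forall xs : list X, exists V, W V /\ forall x, In x xs -> V x) -> ~ fin_fam W.
Proof.
  intros Hproper Hdense Hfin; destruct (fin_fam_In W Hfin) as [l Hl].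
  assert (Hwit : exists xs, forall V, In V l -> W V -> exists x, In x xs /\ ~ V x).
  { clear Hl Hdense; induction l as [|V0 l [xs Hxs]].
    - exists nil; intros V [].
    - destruct (classic (W V0)) as [HV0|HV0].
      + destruct (not_all_ex_not _ _ (Hproper V0 HV0)) as [x0 Hx0].
        exists (x0 :: xs); intros V [<-|HV] HWV.
        * exists x0; split; [left|]; auto.
        * destruct (Hxs V HV HWV) as [x [Hx Hnx]]; exists x; split; [right|]; auto.
      + exists xs; intros V [<-|HV] HWV; [contradiction | auto]. }
  destruct Hwit as [xs Hxs]; destruct (Hdense xs) as [V [HV Hall]].
  destruct (Hxs V (Hl V HV) HV) as [x [Hx Hnx]]; exact (Hnx (Hall x Hx)).
Qed.

Definition converges_to {X : Type} (f : X -> R) (A : (X -> R) -> Prop) : Prop :=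
  forall (xs : list X) (eps : R), 0 < eps ->
    fin_fun (fun g => A g /\ ~ basic_nbhd f xs eps g).

Lemma converges_to_nbhd {X : Type} (f : X -> R) A :
  ~ fin_fun A -> converges_to f A ->
  forall xs eps, 0 < eps -> exists g, A g /\ basic_nbhd f xs eps g.
Proof.
  intros Hinf Hconv xs eps He; destruct (Hconv xs eps He) as [l Hl].
  apply NNPP; intro Hn; apply Hinf; exists l; intros g Hg.
  apply Hl; split; auto; intro Hb; apply Hn; eauto.
Qed.

Lemma converges_to_gamma_cover {X : Type} (f : X -> R) A (S : (X -> R) -> X -> Prop) d :
  0 < d -> ~ fin_fun A -> converges_to f A ->
  (forall h x, Rabs (h x - f x) < d -> S h x) -> (forall h, A h -> ~ (forall x, S h x)) ->
  gamma_cover (fun U => exists h, A h /\ U = S h).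
Proof.
  intros Hd Hinf Hconv HS Hproper.
  assert (Hdense : forall xs, exists U, (exists h, A h /\ U = S h) /\ forall x, In x xs -> U x).
  { intro xs; destruct (converges_to_nbhd f A Hinf Hconv xs d Hd) as [h [Hh Hb]].
    exists (S h); split; eauto. }
  assert (Hproper' : forall U, (exists h, A h /\ U = S h) -> ~ (forall x, U x)).
  { intros U [h [Hh ->]]; auto. }
  split; [split|split].
  - intro x; destruct (Hdense (x :: nil)) as [U [HU Hx]]; exists U; split; auto; apply Hx; left; auto.
  - intros [U [HU Hall]]; exact (Hproper' U HU Hall).
  - exact (omega_cover_not_fin_fam _ Hproper' Hdense).
  - intro x; destruct (Hconv (x :: nil) d Hd) as [l Hl]; exists (map S l).
    intros U [[h [Hh ->]] Hnx]; exists (S h); split; [|tauto].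
    apply in_map, Hl; split; auto; intro Hb; apply Hnx, HS, Hb; left; auto.
Qed.

Definition continuous2_at (phi : R -> R -> R) (a b : R) : Prop :=
  forall eps, 0 < eps -> exists d, 0 < d /\
    forall u v, Rabs (u - a) < d -> Rabs (v - b) < d -> Rabs (phi u v - phi a b) < eps.

Lemma continuous2_at_fst (psi : R -> R) a b :
  continuity_pt psi a -> continuous2_at (fun u _ => psi u) a b.
Proof.
  intros Hpsi eps He; destruct (Hpsi eps He) as [d [Hd H]]; exists d; split; auto.
  intros u v Hu _; destruct (Req_dec u a) as [->|Hne].
  - unfold Rminus; rewrite Rplus_opp_r, Rabs_R0; lra.
  - apply (H u); split; [split; [exact I | auto] | exact Hu].
Qed.

Lemma continuous2_at_plus a b : continuous2_at Rplus a b.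
Proof.
  intros eps He; exists (eps / 2); split; [lra|]; intros u v Hu Hv.
  replace (u + v - (a + b)) with ((u - a) + (v - b)) by ring.
  eapply Rle_lt_trans; [apply Rabs_triang | lra].
Qed.

Lemma continuous2_at_minus a b : continuous2_at Rminus a b.
Proof.
  intros eps He; exists (eps / 2); split; [lra|]; intros u v Hu Hv.
  replace (u - v - (a - b)) with ((u - a) - (v - b)) by ring.
  eapply Rle_lt_trans; [apply Rabs_triang | rewrite Rabs_Ropp; lra].
Qed.

Lemma continuous2_at_mult a b : continuous2_at Rmult a b.
Proof.
  intros eps He; pose proof (Rabs_pos a); pose proof (Rabs_pos b).
  set (M := Rabs a + Rabs b + 1).
  assert (HM : 0 < eps / M) by (apply Rdiv_lt_0_compat; unfold M; lra).
  exists (Rmin 1 (eps / M)); split; [apply Rmin_pos; lra|]; intros u v Hu Hv.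
  pose proof (Rmin_l 1 (eps / M)); pose proof (Rmin_r 1 (eps / M)).
  pose proof (Rabs_pos (u - a)); pose proof (Rabs_pos (v - b)).
  replace (u * v - a * b) with ((u - a) * (v - b) + (u - a) * b + a * (v - b)) by ring.
  assert (Htri : Rabs ((u - a) * (v - b) + (u - a) * b + a * (v - b))
      <= Rabs (u - a) * Rabs (v - b) + Rabs (u - a) * Rabs b + Rabs a * Rabs (v - b)).
  { rewrite <- !Rabs_mult; eapply Rle_trans; [apply Rabs_triang|].
    apply Rplus_le_compat_r, Rabs_triang. }
  assert (HdM : Rmin 1 (eps / M) * M <= eps).
  { apply Rle_trans with (eps / M * M); [apply Rmult_le_compat_r; [unfold M; lra | assumption]|].
    right; field; unfold M; lra. }
  set (d := Rmin 1 (eps / M)) in *.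
  assert (Hdudv : Rabs (u - a) * Rabs (v - b) <= Rabs (u - a)) by nra.
  assert (Hdu : Rabs (u - a) * (1 + Rabs b) < d * (1 + Rabs b)) by nra.
  assert (Hdv : Rabs a * Rabs (v - b) <= Rabs a * d) by nra.
  unfold M in HdM; nra.
Qed.

Section Space.

Variables (X : Type) (op : (X -> Prop) -> Prop).
Hypothesis Htop : is_topology X op.

Lemma op_ext (U V : X -> Prop) : op U -> (forall x, U x <-> V x) -> op V.
Proof. intros H E; rewrite <- (set_ext U V E); exact H. Qed.

(* The preimage of an open V is the union of the open boxes {|g1 - a| < d, |g2 - b| < d} that phi maps into V. *)
Lemma continuous_R_comp2 (phi : R -> R -> R) (g1 g2 : X -> R) :
  continuous_R op g1 -> continuous_R op g2 -> (forall x, continuous2_at phi (g1 x) (g2 x)) ->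
  continuous_R op (fun x => phi (g1 x) (g2 x)).
Proof.
  intros H1 H2 Hphi V HV.
  set (box := fun a b d x => Rabs (g1 x - a) < d /\ Rabs (g2 x - b) < d).
  set (boxes := fun S : X -> Prop => exists a b d, 0 < d /\
     (forall u v, Rabs (u - a) < d -> Rabs (v - b) < d -> V (phi u v)) /\ S = box a b d).
  apply op_ext with (fun x => exists S, boxes S /\ S x).
  - apply (top_union _ _ Htop); intros S [a [b [d [Hd [_ ->]]]]].
    apply (top_inter _ _ Htop).
    + exact (H1 (disc a (mkposreal d Hd)) (disc_P1 _ _)).
    + exact (H2 (disc b (mkposreal d Hd)) (disc_P1 _ _)).
  - intro x; split.
    + intros [S [[a [b [d [Hd [HS ->]]]]] [Ha Hb]]]; apply HS; auto.
    + intro Hx; destruct (HV _ Hx) as [del Hdel].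
      destruct (Hphi x del (cond_pos del)) as [d [Hd Hbox]].
      exists (box (g1 x) (g2 x) d); split.
      * exists (g1 x), (g2 x), d; repeat split; auto.
        intros u v Hu Hv; apply Hdel, Hbox; auto.
      * unfold box, Rminus; rewrite !Rplus_opp_r, Rabs_R0; auto.
Qed.

Lemma continuous_R_comp (psi : R -> R) (g : X -> R) :
  continuous_R op g -> (forall x, continuity_pt psi (g x)) -> continuous_R op (fun x => psi (g x)).
Proof.
  intros Hg Hpsi.
  exact (continuous_R_comp2 (fun u _ => psi u) g g Hg Hg (fun x => continuous2_at_fst _ _ _ (Hpsi x))).
Qed.

Lemma continuous_R_const (c : R) : continuous_R op (fun _ => c).
Proof.
  intros V HV; destruct (classic (V c)) as [Hc|Hc].
  - apply op_ext with (fun _ => True); [apply (top_full _ _ Htop) | tauto].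
  - apply op_ext with (fun x => exists U : X -> Prop, False /\ U x).
    + apply (top_union _ _ Htop); intros U [].
    + intro x; split; [intros [U [[] _]] | contradiction].
Qed.

Lemma continuous_R_plus g1 g2 :
  continuous_R op g1 -> continuous_R op g2 -> continuous_R op (fun x => g1 x + g2 x).
Proof. intros H1 H2; apply (continuous_R_comp2 Rplus); auto; intro; apply continuous2_at_plus. Qed.

Lemma continuous_R_minus g1 g2 :
  continuous_R op g1 -> continuous_R op g2 -> continuous_R op (fun x => g1 x - g2 x).
Proof. intros H1 H2; apply (continuous_R_comp2 Rminus); auto; intro; apply continuous2_at_minus. Qed.

Lemma continuous_R_mult g1 g2 :
  continuous_R op g1 -> continuous_R op g2 -> continuous_R op (fun x => g1 x * g2 x).
Proof. intros H1 H2; apply (continuous_R_comp2 Rmult); auto; intro; apply continuous2_at_mult. Qed.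

Lemma continuous_R_abs g : continuous_R op g -> continuous_R op (fun x => Rabs (g x)).
Proof. intro H; apply (continuous_R_comp Rabs); auto; intro; apply Rcontinuity_abs. Qed.

Lemma continuous_R_inv g :
  continuous_R op g -> (forall x, g x <> 0) -> continuous_R op (fun x => / g x).
Proof.
  intros H Hnz; apply (continuous_R_comp Rinv); auto; intro x.
  apply (continuity_pt_inv id); [apply derivable_continuous_pt, derivable_pt_id | apply Hnz].
Qed.



Lemma cozero_set_open U : cozero_set op U -> op U.
Proof.
  intros [g [Hg HU]]; apply op_ext with (fun x => (fun y => y <> 0) (g x)).
  - apply (Hg (fun y => y <> 0)); intros y Hy.
    exists (mkposreal (Rabs y) (Rabs_pos_lt y Hy)); intros z Hz ->.
    unfold disc in Hz; simpl in Hz; rewrite Rminus_0_l, Rabs_Ropp in Hz; lra.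
  - intro x; rewrite HU; tauto.
Qed.

Lemma zero_set_le g c : continuous_R op g -> zero_set op (fun x => g x <= c).
Proof.
  intro Hg; exists (fun x => (g x - c) + Rabs (g x - c)); split.
  - apply continuous_R_plus; [|apply continuous_R_abs];
      apply continuous_R_minus; auto; apply continuous_R_const.
  - intro x; unfold Rabs; destruct (Rcase_abs (g x - c)); split; intro; lra.
Qed.

Lemma cozero_set_lt g c : continuous_R op g -> cozero_set op (fun x => g x < c).
Proof.
  intro Hg; exists (fun x => (g x - c) - Rabs (g x - c)); split.
  - apply continuous_R_minus; [|apply continuous_R_abs];
      apply continuous_R_minus; auto; apply continuous_R_const.
  - intro x; unfold Rabs; destruct (Rcase_abs (g x - c)); split; intro; lra.
Qed.

Lemma Rabs_eq_0 r : Rabs r = 0 -> r = 0.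
Proof. intro H; apply NNPP; intro Hn; exact (Rabs_no_R0 r Hn H). Qed.

(* h = |a| / (|a| + |b|), where a vanishes exactly on Z and b exactly off V. *)
Lemma zero_cozero_separating_function (Z V : X -> Prop) :
  zero_set op Z -> cozero_set op V -> (forall x, Z x -> V x) ->
  exists h, continuous_R op h /\ (forall x, h x = 0 <-> Z x) /\ (forall x, ~ V x -> h x = 1).
Proof.
  intros [a [Ha HZ]] [b [Hb HV]] HZV.
  assert (Hden : forall x, Rabs (a x) + Rabs (b x) <> 0).
  { intros x E; pose proof (Rabs_pos (a x)); pose proof (Rabs_pos (b x)).
    apply (proj1 (HV x)); [apply HZV, HZ |]; apply Rabs_eq_0; lra. }
  exists (fun x => Rabs (a x) * / (Rabs (a x) + Rabs (b x))); split; [|split].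
  - apply continuous_R_mult; [apply continuous_R_abs; auto|].
    apply continuous_R_inv; auto; apply continuous_R_plus; apply continuous_R_abs; auto.
  - intro x; rewrite HZ; split.
    + intro E; destruct (Rmult_integral _ _ E) as [Ea|Einv].
      * apply Rabs_eq_0; auto.
      * destruct (Rinv_neq_0_compat _ (Hden x) Einv).
    + intros ->; rewrite Rabs_R0; ring.
  - intros x Hnv; assert (Eb : b x = 0) by (apply NNPP; intro; apply Hnv, HV; auto).
    assert (Ed : Rabs (a x) + Rabs (b x) = Rabs (a x)) by (rewrite Eb, Rabs_R0; ring).
    rewrite Ed; apply Rinv_r; rewrite <- Ed; apply Hden.
Qed.

(* One separating function per zero set Z = F(U) (not per U): distinct members then have
   distinct zero sets, which is what makes the sequence infinite and convergent. *)
Lemma Gamma_f0_of_Gamma_F (UU : (X -> Prop) -> Prop) :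
  Gamma_F op UU -> exists A, Gamma_f op (fun _ => 0) A /\
    forall g, A g -> exists U, UU U /\ forall x, Rabs (g x - 0) < 1 -> U x.
Proof.
  intros [_ [Hcoz [F [HF HZgam]]]].
  set (Zs := fun Z => exists V, UU V /\ Z = F V) in HZgam.
  assert (Hsep : forall Z, exists h : X -> R, Zs Z -> exists V, UU V /\ Z = F V /\
      continuous_R op h /\ (forall x, h x = 0 <-> Z x) /\ (forall x, ~ V x -> h x = 1)).
  { intro Z; destruct (classic (Zs Z)) as [[V [HV ->]]|HnZ]; [|exists (fun _ => 0); tauto].
    destruct (HF V HV) as [HZ HZV].
    destruct (zero_cozero_separating_function _ _ HZ (Hcoz V HV) HZV) as [h Hh].
    exists h; intros _; exists V; auto. }
  destruct (choice _ Hsep) as [H HH].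
  assert (Hzero : forall Z, Zs Z -> forall x, H Z x = 0 <-> Z x).
  { intros Z HZ; destruct (HH Z HZ) as [V [_ [_ [_ [E _]]]]]; exact E. }
  exists (fun g => exists Z, Zs Z /\ g = H Z); split; [repeat split|].
  - intros g [Z [HZ ->]]; destruct (HH Z HZ) as [V [_ [_ [Hc _]]]]; exact Hc.
  - intros [l Hl]; apply (proj1 (proj2 HZgam)).
    exists (map (fun (g : X -> R) x => g x = 0) l); intros Z HZ.
    exists (fun x => H Z x = 0); split.
    + apply (in_map (fun (g : X -> R) x => g x = 0)), Hl; eauto.
    + intro x; rewrite Hzero; tauto.
  - intros [Z [HZ E]]; apply (proj2 (proj1 HZgam)); exists Z; split; auto.
    intro x; apply (Hzero Z HZ); rewrite <- E; reflexivity.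
  - intros xs eps Heps; destruct (gamma_cover_missing_finite _ xs HZgam) as [L HL].
    exists (map H L); intros g [[Z [HZ ->]] Hnb]; apply in_map, HL; auto.
    apply NNPP; intro Hin; apply Hnb; intros x Hx.
    rewrite (proj2 (Hzero Z HZ x)); [rewrite Rminus_0_r, Rabs_R0; auto|].
    apply NNPP; intro Hnx; apply Hin; eauto.
  - intros g [Z [HZ ->]]; destruct (HH Z HZ) as [V [HV [_ [_ [_ Hoff]]]]].
    exists V; split; auto; intros x Hx; apply NNPP; intro Hnx.
    rewrite (Hoff x Hnx), Rminus_0_r, Rabs_R1 in Hx; lra.
Qed.

Lemma S1_GammaF_O_of_S1_Gamma_B :
  (forall f : X -> R, continuous_R op f -> S1_fun (Gamma_f op f) (B_f op f)) ->
  S1_set (Gamma_F op) (open_cover op).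
Proof.
  intros HCp Un HUn.
  destruct (choice _ (fun n => Gamma_f0_of_Gamma_F (Un n) (HUn n))) as [An HAn].
  destruct (HCp (fun _ => 0) (continuous_R_const 0) An (fun n => proj1 (HAn n)))
    as [p [Hp [_ Hdense]]].
  destruct (choice _ (fun n => proj2 (HAn n) (p n) (Hp n))) as [u Hu].
  exists u; split; [intro n; apply Hu|]; split; [split|].
  - intro x; destruct (Hdense x 1 Rlt_0_1) as [h [[n ->] Hh]].
    exists (u n); split; [exists n; auto | apply (proj2 (Hu n)); auto].
  - intros [V [[n ->] Hall]]; destruct (HUn n) as [[[_ Hproper] _] _].
    apply Hproper; exists (u n); split; [apply Hu | auto].
  - intros V [n ->]; apply cozero_set_open; destruct (HUn n) as [_ [Hc _]]; apply Hc, Hu.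
Qed.

Definition close_set (f : X -> R) (c : R) (h : X -> R) : X -> Prop :=
  fun x => Rabs (h x - f x) < c.

(* F(U) := {|h - f| <= c/2} for a chosen h with U = close_set f c h. *)
Lemma Gamma_F_close_sets (f : X -> R) A c :
  continuous_R op f -> 0 < c -> Gamma_f op f A ->
  ~ (exists h, A h /\ forall x, close_set f c h x) ->
  Gamma_F op (fun U => exists h, A h /\ U = close_set f c h).
Proof.
  intros Hf Hc [Hcont [Hinf [_ Hconv]]] Hno.
  assert (Hproper : forall h, A h -> ~ (forall x, close_set f c h x)) by eauto.
  assert (Hgam : gamma_cover (fun U => exists h, A h /\ U = close_set f c h)).
  { apply (converges_to_gamma_cover f A _ c); auto. }
  set (hV := fun V => epsilon (inhabits f) (fun h => A h /\ V = close_set f c h)).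
  assert (HhV : forall h, A h ->
      A (hV (close_set f c h)) /\ close_set f c h = close_set f c (hV (close_set f c h))).
  { intros h Hh; apply (epsilon_spec (inhabits f)); eauto. }
  set (A' := fun g => exists h, A h /\ g = hV (close_set f c h)).
  assert (HA' : forall g, A' g -> A g) by (intros g [h [Hh ->]]; apply HhV, Hh).
  assert (Hinf' : ~ fin_fun A').
  { intros [l Hl]; apply (proj1 (proj2 Hgam)); exists (map (close_set f c) l).
    intros U [h [Hh ->]]; exists (close_set f c h); split; [|tauto].
    rewrite (proj2 (HhV h Hh)); apply in_map, Hl; exists h; auto. }
  assert (Hconv' : converges_to f A').
  { intros xs eps He; destruct (Hconv xs eps He) as [l Hl].
    exists l; intros g [Hg Hn]; apply Hl; auto. }
  set (ball := fun (g : X -> R) x => Rabs (g x - f x) <= c / 2).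
  assert (EZ : (fun Z => exists V, (exists h, A h /\ V = close_set f c h) /\ Z = ball (hV V))
             = (fun Z => exists g, A' g /\ Z = ball g)).
  { apply set_ext; intro Z; split.
    - intros [V [[h [Hh ->]] ->]]; exists (hV (close_set f c h)); split; auto; exists h; auto.
    - intros [g [[h [Hh ->]] ->]]; exists (close_set f c h); split; eauto. }
  split; [exact Hgam | split].
  - intros U [h [Hh ->]]; apply cozero_set_lt, continuous_R_abs, continuous_R_minus; auto.
  - exists (fun V => ball (hV V)); split.
    + intros V [h [Hh ->]]; split.
      * apply zero_set_le, continuous_R_abs, continuous_R_minus; auto; apply Hcont, HhV, Hh.
      * intros x Hx; rewrite (proj2 (HhV h Hh)); unfold close_set, ball in *; lra.
    + rewrite EZ; apply (converges_to_gamma_cover f A' ball (c / 2)); auto; [lra | |].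
      * intros h x Hx; unfold ball; lra.
      * intros g Hg Hall; apply (Hproper g (HA' g Hg)); intro x.
        specialize (Hall x); unfold ball, close_set in *; lra.
Qed.

Lemma S1_select_close (f : X -> R) c (P : nat -> (X -> R) -> Prop) :
  S1_set (Gamma_F op) (open_cover op) -> continuous_R op f -> 0 < c ->
  (forall m, Gamma_f op f (P m)) ->
  exists q, (forall m, P m (q m)) /\ forall x, exists m, close_set f c (q m) x.
Proof.
  intros HS1 Hf Hc HP.
  destruct (classic (exists m h, P m h /\ forall x, close_set f c h x))
    as [[m0 [h0 [Hh0 Hall]]]|Hno].
  - assert (Hq : forall m, exists g, P m g /\ (m = m0 -> g = h0)).
    { intro m; destruct (Nat.eq_dec m m0) as [->|Hm]; [exists h0; auto|].
      destruct (HP m) as [_ [Hinf [_ Hconv]]].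
      destruct (converges_to_nbhd f _ Hinf Hconv nil 1 Rlt_0_1) as [g [Hg _]].
      exists g; split; auto; intro; contradiction. }
    destruct (choice _ Hq) as [q Hq']; exists q; split; [intro m; apply Hq'|].
    intro x; exists m0; rewrite (proj2 (Hq' m0) eq_refl); apply Hall.
  - assert (HG : forall m, Gamma_F op (fun U => exists h, P m h /\ U = close_set f c h)).
    { intro m; apply Gamma_F_close_sets; auto; intros [h [Hh Hall]]; apply Hno; eauto. }
    destruct (HS1 _ HG) as [u [Hu [[Hcov _] _]]].
    destruct (choice _ Hu) as [q Hq]; exists q; split; [intro m; apply Hq|].
    intro x; destruct (Hcov x) as [V [[m ->] Hx]]; exists m.
    rewrite (proj2 (Hq m)) in Hx; exact Hx.
Qed.

Lemma S1_Gamma_B_of_S1_GammaF_O :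
  S1_set (Gamma_F op) (open_cover op) ->
  forall f : X -> R, continuous_R op f -> S1_fun (Gamma_f op f) (B_f op f).
Proof.
  intros HS1 f Hf Pn HPn.
  assert (Hblock : forall k, exists q : nat -> X -> R,
      (forall m, Pn (Cantor.to_nat (k, m)) (q m)) /\
      forall x, exists m, close_set f (/ (INR k + 1)) (q m) x).
  { intro k; apply (S1_select_close f _ (fun m => Pn (Cantor.to_nat (k, m)))); auto.
    apply Rinv_0_lt_compat; pose proof (pos_INR k); lra. }
  destruct (choice _ Hblock) as [Q HQ].
  set (p := fun n => Q (fst (Cantor.of_nat n)) (snd (Cantor.of_nat n))).
  assert (Hp : forall n, Pn n (p n)).
  { intro n; pose proof (proj1 (HQ (fst (Cantor.of_nat n))) (snd (Cantor.of_nat n))) as H.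
    rewrite <- surjective_pairing, Cantor.cancel_to_of in H; exact H. }
  exists p; split; [exact Hp | split].
  - intros g [n ->]; exact (proj1 (HPn n) _ (Hp n)).
  - intros x eps Heps; destruct (archimed_cor1 eps Heps) as [k [Hk Hk0]].
    destruct (proj2 (HQ k) x) as [m Hm]; exists (Q k m); split.
    + exists (Cantor.to_nat (k, m)); unfold p; rewrite Cantor.cancel_of_to; reflexivity.
    + eapply Rlt_trans; [exact Hm|]; eapply Rle_lt_trans; [|exact Hk].
      apply Rinv_le_contravar; [apply lt_0_INR; exact Hk0 | lra].
Qed.

End Space.

Theorem mainTheorem19 (X : Type) (op : (X -> Prop) -> Prop)
  (Htop : is_topology X op) (Htych : tychonoff op) :
  (forall f : X -> R, continuous_R op f -> S1_fun (Gamma_f op f) (B_f op f))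
  <-> S1_set (Gamma_F op) (open_cover op).
Proof.
  split; [apply S1_GammaF_O_of_S1_Gamma_B | apply S1_Gamma_B_of_S1_GammaF_O]; exact Htop.
Qed.
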